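(* Let $(S,\mathcal{D}_S)$ be an $(n,\delta)$-indexing algorithm over alphabet $\Sigma_S$ with at most $k$ misdecodings. Let $c\in\Sigma_{\mathcal C}^n$ be any codeword, sent via the indexing procedure. Then for every corruption consisting of at most $n\delta$ insertions and deletions, the string $m'\in(\Sigma_{\mathcal C}\cup\{?\})^n$ produced by the indexing procedure has half-error distance at most $n\delta+2k$ from $c$. If moreover $(S,\mathcal{D}_S)$ is error-free, this half-error distance is at most $n\delta+k$.
   Context: Indexing problem. Fix $n$, $\delta$, and a string $S\in\Sigma_S^n$. An adversary applies at most $n\delta$ insertions and deletions to $S$, yielding a received string $S_\tau$; this is described by an order-preserving alignment in which each symbol $S[i]$ is either deleted or delivered unchanged as a unique symbol $S_\tau[j]$, and each symbol of $S_\tau$ is either delivered from a unique $S[i]$ or inserted. Position $j$ of $S_\tau$ is successfully transmitted if it was delivered from some $S[i]$; it is then correctly decoded if the algorithm outputs $i$ for it. An $(n,\delta)$-indexing algorithm $(S,\mathcal D_S)$ consists of $S$ and an algorithm $\mathcal D_S$ which, for any such corruption, outputs for every position of $S_\tau$ either $\bot$ or an index in $\{1,\dots,n\}$. It has at most $k$ misdecodings if for every corruption with at most $n\delta$ insertions and deletions, at most $k$ successfully transmitted positions are not correctly decoded (a $\bot$ output counts as not correctly decoded). It is error-free if every non-$\bot$ output is correct, i.e., it never outputs an index other than the true origin index of a successfully transmitted symbol (and outputs $\bot$ for inserted symbols). Indexing procedure: given a codeword $c\in\Sigma_{\mathcal C}^n$, the sender transmits the string over $\Sigma_{\mathcal C}\times\Sigma_S$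 whose $i$-th symbol is $(c[i],S[i])$. The channel applies at most $n\delta$ insertions and deletions. The receiver applies $\mathcal D_S$ to the sequence of second components of the received string; then for each $i\in\{1,\dots,n\}$, if exactly one received position $j$ was assigned index $i$, it sets $m'_i$ to the first component of the $j$-th received symbol, and otherwise sets $m'_i=?$ (an erasure). Half-error distance between $c$ and $m'$: the number of $i$ with $m'_i=?$ plus twice the number of $i$ with $m'_i\neq ?$ and $m'_i\neq c[i]$. *)

From mathcomp Require Import all_boot all_order all_algebra.
Set Implicit Arguments. Unset Strict Implicit. Unset Printing Implicit Defensive.
Import Order.TTheory GRing.Theory Num.Theory.

(* A received string is a
   sequence r : seq T together with an alignment a : seq (option 'I_n) of the
   same length: a`_j = Some i means position j of r was delivered (unchanged)
   from position i of the source; a`_j = None means position j was inserted. *)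
Definition is_alignment (n : nat) (T : Type) (s : 'I_n -> T)
    (r : seq T) (a : seq (option 'I_n)) : Prop :=
  [/\ size a = size r,
      (forall (j : nat) (i : 'I_n), nth None a j = Some i -> onth r j = Some (s i))
    & (forall (j1 j2 : nat) (i1 i2 : 'I_n), (j1 < j2)%N ->
         nth None a j1 = Some i1 -> nth None a j2 = Some i2 -> (i1 < i2)%N)].

Definition n_delivered (n : nat) (a : seq (option 'I_n)) : nat :=
  count (fun o => o != None) a.

Definition n_insdel (n : nat)  (r_size : nat) (a : seq (option 'I_n)) : nat :=
  (n - n_delivered a) + (r_size - n_delivered a).
Arguments n_insdel : clear implicits.

Definition valid_corruption (R : realFieldType) (n : nat) (delta : R) (T : Type)
    (s : 'I_n -> T) (r : seq T) (a : seq (option 'I_n)) : Prop :=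
  is_alignment s r a /\ ((n_insdel n (size r) a)%:R <= n%:R * delta)%R.

(* A decoder maps a received string to one output per position:
   None = bottom, Some i = index i.  Output at position j is nth None (D r) j. *)
Definition decoder (n : nat) (SS : Type) := seq SS -> seq (option 'I_n).

Definition n_misdecoded (n : nat) (SS : Type) (D : decoder n SS)
    (r : seq SS) (a : seq (option 'I_n)) : nat :=
  count (fun j => (nth None a j != None) && (nth None (D r) j != nth None a j))
        (iota 0 (size r)).

Definition at_most_k_misdecodings (R : realFieldType) (n : nat) (delta : R)
    (SS : Type) (S : 'I_n -> SS) (D : decoder n SS) (k : nat) : Prop :=
  forall (r : seq SS) (a : seq (option 'I_n)),
    valid_corruption delta S r a -> (n_misdecoded D r a <= k)%N.

Definition error_free (R : realFieldType) (n : nat) (delta : R)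
    (SS : Type) (S : 'I_n -> SS) (D : decoder n SS) : Prop :=
  forall (r : seq SS) (a : seq (option 'I_n)),
    valid_corruption delta S r a ->
    forall j, (j < size r)%N ->
      nth None (D r) j = None \/ nth None (D r) j = nth None a j.

Definition transmitted (n : nat) (SC SS : Type) (c : 'I_n -> SC) (S : 'I_n -> SS)
  : 'I_n -> SC * SS := fun i => (c i, S i).

(* The receiver's output m' (None = erasure '?') *)
Definition indexing_output (n : nat) (SC SS : Type) (D : decoder n SS)
    (r : seq (SC * SS)) : 'I_n -> option SC :=
  fun i =>
    let o := D (map snd r) in
    match [seq j <- iota 0 (size r) | nth None o j == Some i] with
    | [:: j] => omap fst (onth r j)
    | _ => None
    end.

Definition half_error_dist (n : nat) (SC : eqType) (c : 'I_n -> SC)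
    (m' : 'I_n -> option SC) : nat :=
  #|[pred i | m' i == None]| +
  2 * #|[pred i | (m' i != None) && (m' i != Some (c i))]|.

(* Consider, for each source index i, the received positions decoded to i.
   Since the alignment is injective, at most one of them is decoded correctly,
   and if it is the only one the receiver recovers c[i].  Hence the cost of i in
   the half-error distance (0, 1 or 2) plus the number of correct positions
   decoded to i is at most 1 plus the number of wrong ones; summing over i,
   distance + #correct <= n + #wrong.  Every delivered position is correct or
   misdecoded, and every wrong position is inserted or misdecoded, which gives
   n delta + 2k; an error-free decoder has no wrong positions, giving n delta + k. *)

From mathcomp Require Import all_boot all_order all_algebra.
From mathcomp Require Import zify.
Import Order.TTheory GRing.Theory Num.Theory.

Set Implicit Arguments.
Unset Strict Implicit.
Unset Printing Implicit Defensive.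

Lemma count_predI_predC (T : Type) (p q : pred T) (s : seq T) :
  count (predI p q) s + count (predI p (predC q)) s = count p s.
Proof. by elim: s => //= x s <-; case: (p x); case: (q x); rewrite /= ?add0n ?addnS. Qed.

Lemma sum_count_eq_Some (T : Type) (I : finType) (f : T -> option I)
    (p : pred T) (s : seq T) :
  \sum_(i : I) count (fun x => p x && (f x == Some i)) s =
  count (fun x => p x && (f x != None)) s.
Proof.
elim: s => [|x s IHs] /=; first by rewrite big1.
rewrite big_split /= IHs; congr (_ + _).
case: (p x) => /=; last by rewrite big1.
case: (f x) => [i0|] /=; last by rewrite big1.
rewrite (bigD1 i0) //= eqxx big1 // => i /negbTE ne_i.
by rewrite eq_sym inj_eq ?ne_i //; exact: Some_inj.
Qed.

Lemma count_iota_nth (T : Type) (x0 : T) (p : pred T) (s : seq T) :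
  count p s = count (fun j => p (nth x0 s j)) (iota 0 (size s)).
Proof. by rewrite -{1}(mkseq_nth x0 s) count_map. Qed.

Definition half_error_cost (SC : eqType) (x : option SC) (y : SC) : nat :=
  (x == None) + 2 * ((x != None) && (x != Some y)).

Lemma half_error_distE (n : nat) (SC : eqType) (c : 'I_n -> SC)
    (m' : 'I_n -> option SC) :
  half_error_dist c m' = \sum_(i < n) half_error_cost (m' i) (c i).
Proof.
have card_sum (p : pred 'I_n) : #|[pred i | p i]| = \sum_(i < n) p i.
  by rewrite -sum1_card big_mkcond; apply: eq_bigr => i _; rewrite inE; case: (p i).
by rewrite /half_error_dist !card_sum big_split /= big_distrr.
Qed.

Lemma alignment_count_Some_le1 (n : nat) (T : Type) (s : 'I_n -> T)
    (r : seq T) (a : seq (option 'I_n)) (i : 'I_n) (js : seq nat) :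
  is_alignment s r a -> sorted ltn js ->
  count (fun j => nth None a j == Some i) js <= 1.
Proof.
case=> _ _ increasing sorted_js; rewrite -size_filter.
set P := fun j => nth None a j == Some i.
have : {in filter P js, forall j, P j} by move=> j; rewrite mem_filter => /andP[].
have : sorted ltn (filter P js) by exact: sorted_filter ltn_trans _ _ sorted_js.
case: filter => [|j1 [|j2 t]] //= /andP[lt_j12 _] P_js.
have /eqP a_j1 := P_js j1 (mem_head _ _).
have /eqP a_j2 : P j2 by apply: P_js; rewrite !inE eqxx orbT.
by have := increasing _ _ _ _ lt_j12 a_j1 a_j2; rewrite ltnn.
Qed.

Lemma valid_corruption_snd (R : realFieldType) (n : nat) (delta : R)
    (SC SS : Type) (c : 'I_n -> SC) (S : 'I_n -> SS)
    (r : seq (SC * SS)) (a : seq (option 'I_n)) :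
  valid_corruption delta (transmitted c S) r a ->
  valid_corruption delta S (map snd r) a.
Proof.
case=> -[size_a delivered increasing] insdel; rewrite /valid_corruption size_map.
split=> //; split=> //; first by rewrite size_map.
by move=> j i /delivered; rewrite onth_map => ->.
Qed.

Section IndexingProcedure.

Variables (n : nat) (SS : Type) (SC : eqType).
Variables (S : 'I_n -> SS) (D : decoder n SS) (c : 'I_n -> SC).
Variables (r : seq (SC * SS)) (a : seq (option 'I_n)).
Hypothesis align : is_alignment (transmitted c S) r a.

Local Notation out := (nth None (D (map snd r))).
Local Notation src := (nth None a).
Local Notation positions := (iota 0 (size r)).

Definition decoded_correctly j := (out j != None) && (out j == src j).
Definition decoded_wrongly j := (out j != None) && (out j != src j).

Lemma half_error_cost_le i :
  half_error_cost (indexing_output D r i) (c i)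
    + count (fun j => decoded_correctly j && (out j == Some i)) positions
  <= 1 + count (fun j => decoded_wrongly j && (out j == Some i)) positions.
Proof.
rewrite -!(count_filter _ (fun j => out j == Some i)).
set L := filter _ _.
have out_L j : j \in L -> (j < size r) && (out j == Some i).
  by rewrite mem_filter mem_iota add0n andbC.
have correct_wrong : count decoded_correctly L + count decoded_wrongly L = size L.
  transitivity (count (fun j => out j != None) L); first exact: count_predI_predC.
  by rewrite -count_predT; apply: eq_in_count => j /out_L /andP[_ /eqP ->].
have correct_le1 : count decoded_correctly L <= 1.
  have sorted_L : sorted ltn L.
    exact: sorted_filter ltn_trans _ _ (iota_ltn_sorted 0 _).
  rewrite (@eq_in_count _ _ (fun j => src j == Some i)).
    exact: alignment_count_Some_le1 align sorted_L.
  by move=> j /out_L /andP[_ /eqP out_j]; rewrite /decoded_correctly out_j eq_sym.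
have -> : indexing_output D r i =
          match L with [:: j] => omap fst (onth r j) | _ => None end by [].
case: L out_L correct_wrong correct_le1 => [|j [|j2 t]] out_L;
  rewrite /half_error_cost /=; try lia.
have /andP[j_lt /eqP out_j] := out_L j (mem_head _ _).
rewrite /decoded_correctly /decoded_wrongly out_j /=.
have [src_j|] := eqVneq (Some i) (src j).
  have [_ delivered _] := align.
  by rewrite (delivered j i (esym src_j)) /= eqxx.
rewrite onthE (nth_map (c i, S i)) //=.
by case: eqP; lia.
Qed.

Lemma half_error_dist_le :
  half_error_dist c (indexing_output D r) + count decoded_correctly positions
  <= n + count decoded_wrongly positions.
Proof.
have sum_out (p : pred nat) : (forall j, p j -> out j != None) ->
    count p positions =
    \sum_(i < n) count (fun j => p j && (out j == Some i)) positions.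
  move=> p_out; rewrite sum_count_eq_Some; apply: eq_count => j.
  by case p_j: (p j); rewrite //= p_out ?p_j.
rewrite half_error_distE (sum_out decoded_correctly) => [|j /andP[] //].
rewrite (sum_out decoded_wrongly) => [|j /andP[] //].
rewrite -big_split /= -[n in _ <= n + _]card_ord -sum1_card -big_split /=.
by apply: leq_sum => i _; exact: half_error_cost_le.
Qed.

Local Notation misdecoded := (n_misdecoded D (map snd r) a).

Lemma n_misdecodedE :
  misdecoded = count (fun j => (src j != None) && (out j != src j)) positions.
Proof. by rewrite /n_misdecoded size_map. Qed.

Lemma n_deliveredE : n_delivered a = count (fun j => src j != None) positions.
Proof. by have [<- _ _] := align; rewrite /n_delivered (count_iota_nth None). Qed.

Lemma n_delivered_split :
  n_delivered a = count decoded_correctly positions + misdecoded.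
Proof.
rewrite n_deliveredE n_misdecodedE.
rewrite -(count_predI_predC (fun j => src j != None) (fun j => out j == src j)).
congr (_ + _); apply: eq_count => j /=.
by rewrite /decoded_correctly; case: (out j) (src j) => [x|] [y|].
Qed.

Lemma count_decoded_wrongly_le :
  count decoded_wrongly positions <= (size r - n_delivered a) + misdecoded.
Proof.
rewrite n_deliveredE n_misdecodedE -[X in X - _](size_iota 0).
rewrite -(count_predC (fun j => src j != None)) addKn.
rewrite -(count_predI_predC decoded_wrongly (fun j => src j != None)) addnC.
apply: leq_add; apply: sub_count => j /=.
  by case/andP.
by case/andP=> /andP[_ wrong] delivered; apply/andP.
Qed.

Lemma count_decoded_wrongly_eq0 :
  (forall j, j < size r -> out j = None \/ out j = src j) ->
  count decoded_wrongly positions = 0.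
Proof.
move=> out_sound; rewrite -[RHS](count_pred0 positions); apply: eq_in_count => j.
rewrite mem_iota add0n /decoded_wrongly => /out_sound.
by case=> ->; rewrite ?eqxx ?andbF.
Qed.

End IndexingProcedure.

Theorem theorem10 (R : realFieldType) (n : nat) (delta : R)
    (SS : Type) (SC : eqType) (S : 'I_n -> SS) (D : decoder n SS) (k : nat)
    (c : 'I_n -> SC) :
  at_most_k_misdecodings delta S D k ->
  forall (r : seq (SC * SS)) (a : seq (option 'I_n)),
    valid_corruption delta (transmitted c S) r a ->
    ((half_error_dist c (indexing_output D r))%:R <= n%:R * delta + (2 * k)%:R)%R /\
    (error_free delta S D ->
     ((half_error_dist c (indexing_output D r))%:R <= n%:R * delta + k%:R)%R).
Proof.
move=> few_misdecoded r a corrupt.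
have corrupt_S := valid_corruption_snd corrupt.
have [align insdel_le] := corrupt.
have misdecoded_le := few_misdecoded _ _ corrupt_S.
have half_le := half_error_dist_le D align.
have delivered := n_delivered_split D align.
have wrong_le := count_decoded_wrongly_le D align.
have bound_by_insdel (e : nat) :
    (half_error_dist c (indexing_output D r) <= n_insdel n (size r) a + e)%N ->
    ((half_error_dist c (indexing_output D r))%:R <= n%:R * delta + e%:R)%R.
  by move=> le_e; rewrite -(ler_nat R) natrD in le_e; rewrite (le_trans le_e) ?lerD2r.
split=> [|sound]; apply: bound_by_insdel; rewrite /n_insdel; first by lia.
have no_wrong : count (decoded_wrongly D r a) (iota 0 (size r)) = 0.
  by apply: count_decoded_wrongly_eq0 => j; rewrite -(size_map snd); exact: sound.
by lia.
Qed.
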